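(* Let $G$ be a locally compact group, $O$ a neighborhood of the unit, $K\subseteq G$ compact, and $F\subseteq G$ a finite set with $K\subseteq FO$ and $|F|=(K:O)$. Then for every $M\subseteq K$, $|MO^{-1}\cap F|\geq(M:O)$.
   Context: For $X\subseteq G$ and a neighborhood $O$ of the unit, $(X:O)$ denotes the minimal $n$ such that there is a set $F'\subseteq G$ with $|F'|=n$ and $X\subseteq F'O$, where $F'O=\{fo: f\in F', o\in O\}$. $MO^{-1}=\{mo^{-1}: m\in M, o\in O\}$. *)

From HB Require Import structures.
From mathcomp Require Import all_boot all_order all_algebra.
From mathcomp Require Import finmap.
From mathcomp Require Import all_classical all_reals all_analysis.
Set Implicit Arguments. Unset Strict Implicit. Unset Printing Implicit Defensive.
Local Open Scope classical_set_scope.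

Definition is_topological_group (T : topologicalType)
  (mul : T -> T -> T) (inv : T -> T) (one : T) : Prop :=
  [/\ (forall x y z, mul x (mul y z) = mul (mul x y) z),
      (forall x, mul one x = x /\ mul x one = x),
      (forall x, mul (inv x) x = one /\ mul x (inv x) = one),
      continuous (fun p : T * T => mul p.1 p.2) &
      continuous inv].

Definition setmul (T : Type) (mul : T -> T -> T) (A B : set T) : set T :=
  [set mul a b | a in A & b in B].

Definition setinv (T : Type) (inv : T -> T) (A : set T) : set T :=
  [set inv a | a in A].

Definition covers_with (T : choiceType) (mul : T -> T -> T)
  (X O : set T) (n : nat) : Prop :=
  exists F' : {fset T}, #|` F'|%fset = n /\ X `<=` setmul mul [set` F'] O.

(* n = (X : O): the minimal n such that X is covered by n left translates of O. *)
Definition is_cover_number (T : choiceType) (mul : T -> T -> T)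
  (X O : set T) (n : nat) : Prop :=
  covers_with mul X O n /\ (forall m, covers_with mul X O m -> (n <= m)%N).

(* If [x = f o] with [f] in [F] and [o] in [O], then [f = x o^-1] lies in
   [M O^-1]; so the elements of [F] lying in [M O^-1] already cover [M] by
   left translates of [O], and [(M : O)] is at most their number. *)
From HB Require Import structures.
From mathcomp Require Import all_boot all_order all_algebra.
From mathcomp Require Import finmap.
From mathcomp Require Import all_classical all_reals all_analysis.
Set Implicit Arguments. Unset Strict Implicit. Unset Printing Implicit Defensive.
Local Open Scope classical_set_scope.

Lemma is_cover_number_le (T : choiceType) (mul : T -> T -> T) (X O : set T)
    (n : nat) (F : {fset T}) :
  is_cover_number mul X O n -> X `<=` setmul mul [set` F] O ->
  (n <= #|` F|%fset)%N.
Proof. by move=> [_ n_min] XFO; apply: n_min; exists F. Qed.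

Section TraceCover.

Variables (T : choiceType) (mul : T -> T -> T) (inv : T -> T) (one : T).
Hypothesis mulA : forall x y z, mul x (mul y z) = mul (mul x y) z.
Hypothesis mulx1 : forall x, mul x one = x.
Hypothesis mulxV : forall x, mul x (inv x) = one.

Lemma mulK (x y : T) : mul (mul x y) (inv y) = x.
Proof. by rewrite -mulA mulxV mulx1. Qed.

Lemma sub_setmul_trace (M O : set T) (F : {fset T}) :
  M `<=` setmul mul [set` F] O ->
  M `<=` setmul mul [set` [fset f in F | f \in setmul mul M (setinv inv O)]%fset] O.
Proof.
move=> MFO x Mx; case: (MFO x Mx) => f Ff [] o Oo xfo.
exists f; last by exists o.
rewrite /= !inE /= Ff in_setE; exists x; first exact: Mx.
by exists (inv o); [exists o | rewrite -xfo mulK].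
Qed.

End TraceCover.

Theorem proposition7 (G : topologicalType) (mul : G -> G -> G) (inv : G -> G)
  (one : G) (Ggrp : is_topological_group mul inv one)
  (Glc : locally_compact [set: G])
  (O : set G) (hO : nbhs one O) (K : set G) (hK : compact K)
  (F : {fset G}) (hKF : K `<=` setmul mul [set` F] O)
  (hF : is_cover_number mul K O #|` F|%fset) :
  forall M : set G, M `<=` K ->
  forall m : nat, is_cover_number mul M O m ->
  (m <= #|` [fset x in F | x \in setmul mul M (setinv inv O)]%fset|%fset)%N.
Proof.
move=> M MK m hm; case: Ggrp => mulA mul1 mulV _ _.
apply: (is_cover_number_le hm).
apply: (sub_setmul_trace mulA (fun x => (mul1 x).2) (fun x => (mulV x).2)).
exact: subset_trans MK hKF.
Qed.
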